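(* Let $G$ be a finite simple connected graph and let $S,S'\subseteq V(G)$ with $2\le |S|$ and $S\subset S'$. If $G$ contains $k$ completely independent $S'$-Steiner trees, then $G$ contains $k$ completely independent $S$-Steiner trees. In particular $\kappa^*_G(S)\geq \kappa^*_G(S')$.
   Context: For $S\subseteq V(G)$ with $|S|\ge 2$, an $S$-Steiner tree of $G$ is a subtree $T$ of $G$ with $S\subseteq V(T)$ all of whose leaves belong to $S$. A family of $S$-Steiner trees $T_1,\dots,T_k$ is completely independent if for all $1\le p<q\le k$: $E(T_p)\cap E(T_q)=\emptyset$, $V(T_p)\cap V(T_q)=S$, and for any two vertices $x_1,x_2\in S$ the $(x_1,x_2)$-paths in $T_p$ and in $T_q$ are internally disjoint. $\kappa^*_G(S)$ is the maximum number of $S$-Steiner trees in a completely independent family in $G$. *)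

From mathcomp Require Import all_boot.
Set Implicit Arguments. Unset Strict Implicit. Unset Printing Implicit Defensive.

Definition simple_graph (V : finType) (adj : rel V) : Prop :=
  symmetric adj /\ irreflexive adj.

Definition graph_connected (V : finType) (adj : rel V) : Prop :=
  forall x y : V, connect adj x y.

(* A subgraph H = (VH, EH); edges are unordered pairs {x,y}. *)
Definition subgraph V : Type := ({set V} * {set {set V}})%type.

Definition is_subgraph (V : finType) (adj : rel V) (H : subgraph V) : Prop :=
  forall eps, eps \in H.2 ->
    exists x y, [/\ eps = [set x; y], adj x y, x \in H.1 & y \in H.1].

Definition hadj (V : finType) (H : subgraph V) : rel V :=
  fun a b => [set a; b] \in H.2.

Definition is_path (V : finType) (H : subgraph V) (x y : V) (p : seq V) : Prop :=
  [/\ x \in H.1, path (hadj H) x p, uniq (x :: p) & last x p = y].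

Definition sub_connected (V : finType) (H : subgraph V) : Prop :=
  forall x y, x \in H.1 -> y \in H.1 -> exists p, is_path H x y p.

Definition has_cycle (V : finType) (H : subgraph V) : Prop :=
  exists c : seq V, [/\ 3 <= size c, uniq c & cycle (hadj H) c].

Definition is_tree (V : finType) (adj : rel V) (H : subgraph V) : Prop :=
  [/\ is_subgraph adj H, sub_connected H & ~ has_cycle H].

Definition degree (V : finType) (H : subgraph V) (v : V) : nat :=
  #|[set eps in H.2 | v \in eps]|.

Definition steiner_tree (V : finType) (adj : rel V) (S : {set V}) (H : subgraph V) : Prop :=
  [/\ is_tree adj H, S \subset H.1 &
      forall v, v \in H.1 -> degree H v = 1 -> v \in S].

(* internal vertices of the path x :: p (drop the first and last vertex) *)
Definition internal (V : Type) (p : seq V) : seq V := take (size p).-1 p.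

Definition completely_independent (V : finType) (adj : rel V) (S : {set V})
  (k : nat) (T : 'I_k -> subgraph V) : Prop :=
  (forall i, steiner_tree adj S (T i)) /\
  (forall p q : 'I_k, p < q ->
     [/\ [disjoint (T p).2 & (T q).2],
         (T p).1 :&: (T q).1 = S &
         forall x1 x2, x1 \in S -> x2 \in S ->
           forall P Q, is_path (T p) x1 x2 P -> is_path (T q) x1 x2 Q ->
             [disjoint internal P & internal Q]]).

Definition has_cist (V : finType) (adj : rel V) (S : {set V}) (k : nat) : Prop :=
  exists T : 'I_k -> subgraph V, completely_independent adj S T.

Definition is_kappa_star (V : finType) (adj : rel V) (S : {set V}) (m : nat) : Prop :=
  has_cist adj S m /\ forall k, has_cist adj S k -> k <= m.

From mathcomp Require Import all_boot.
Set Implicit Arguments. Unset Strict Implicit. Unset Printing Implicit Defensive.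

(* Prune every S'-Steiner tree T to the hull of S in T: the vertices of S
   together with the vertices whose removal separates two vertices of S, i.e.
   the union of the T-paths between vertices of S.  The hull is an S-Steiner
   tree, since a hull vertex outside S is internal to such a path and so has
   two neighbours in the hull.  If a vertex outside S lay in the hulls of two
   trees, it would separate some pair of vertices of S in both trees at once,
   hence be internal to both connecting paths, against complete independence.
   Disjointness of edges and of internal path vertices passes to subtrees. *)

Section Relations.
Variable V : finType.
Implicit Types (e : rel V) (x y v : V) (p : seq V).

Lemma connect_uniq_path e x y : connect e x y ->
  exists p, [/\ path e x p, uniq (x :: p) & last x p = y].
Proof.
case/connectP=> p ep ->; case: (shortenP ep) => p' ep' up' _; by exists p'.
Qed.

Definition avoid e v : rel V := [rel x y | [&& e x y, x != v & y != v]].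

Lemma avoid_sub e v : subrel (avoid e v) e.
Proof. by move=> x y /andP[]. Qed.

Lemma connect_avoid_sym e v : symmetric e -> connect_sym (avoid e v).
Proof.
move=> se; apply: sym_connect_sym => x y.
by rewrite /avoid /= se; congr (_ && _); apply: andbC.
Qed.

Lemma path_avoid e v x p : path e x p -> v \notin x :: p -> path (avoid e v) x p.
Proof.
elim: p x => //= y p IH x /andP[exy ep].
rewrite !in_cons !negb_or => /andP[vx /andP[vy vp]].
rewrite /avoid /= exy eq_sym vx eq_sym vy /=; apply: IH => //.
by rewrite in_cons negb_or vy.
Qed.

Lemma path_avoid_notin e v x p : path (avoid e v) x p -> v \notin p.
Proof.
elim: p x => //= y p IH x /andP[/and3P[_ _ yv] ep].
by rewrite in_cons negb_or eq_sym yv (IH y).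
Qed.

Lemma split_path_at e x p v : path e x p -> uniq (x :: p) -> v \in p ->
    v != last x p ->
  exists a b, [/\ e a v, e v b, a \in x :: p & b \in x :: p] /\
    [/\ a != b, connect (avoid e v) x a & connect (avoid e v) b (last x p)].
Proof.
move=> ep up vp; case/splitPr: vp ep up => p1 p2.
rewrite last_cat /=; case: p2 => [|b p3]; first by rewrite /= eqxx.
move=> ep up _.
have : uniq ((x :: p1) ++ v :: b :: p3) by [].
rewrite cat_uniq => /and3P[_ hn /= /andP[]].
rewrite in_cons negb_or => /andP[vb vp3] _.
move: ep; rewrite -cat_cons cat_path /= => /and4P[e1 eav evb e3].
have al := mem_last x p1.
have vn : v \notin x :: p1 by apply: contra hn => h; rewrite /= h.
have bn : b \notin x :: p1 by apply: contra hn => h; rewrite /= h orbT.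
exists (last x p1), b; split; split => //.
- by rewrite -cat_cons mem_cat al.
- by rewrite -cat_cons mem_cat !in_cons eqxx !orbT.
- by apply: contraNneq bn => <-.
- exact: path_connect (path_avoid e1 vn) _ al.
- apply: path_connect (path_avoid e3 _) _ (mem_last _ _).
  by rewrite in_cons negb_or vb vp3.
Qed.

Lemma common_unrelated_pair (R1 R2 : rel V) (A : {pred V}) x1 x2 y1 y2 :
    symmetric R1 -> transitive R1 -> symmetric R2 -> transitive R2 ->
    x1 \in A -> x2 \in A -> y1 \in A -> y2 \in A -> ~~ R1 x1 x2 -> ~~ R2 y1 y2 ->
  exists z1 z2, [/\ z1 \in A, z2 \in A, ~~ R1 z1 z2 & ~~ R2 z1 z2].
Proof.
move=> s1 t1 s2 t2 x1A x2A y1A y2A n1 n2.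
have [z zA nz] : exists2 z, z \in A & ~~ R2 x1 z.
  case: (boolP (R2 x1 y1)) => h1; last by exists y1.
  exists y2 => //; apply: contra n2 => h2.
  by apply: (t2 x1); [rewrite s2 |].
case: (boolP (R2 x1 x2)) => h12; last by exists x1, x2.
case: (boolP (R1 x1 z)) => h1z; last by exists x1, z.
exists x2, z; split => //.
- by apply: contra n1 => h; apply: (t1 z); last rewrite s1.
- by apply: contra nz; exact: t2.
Qed.

End Relations.

Section Subgraphs.
Variable V : finType.
Implicit Types (H T : subgraph V) (S : {set V}) (x y v : V) (p : seq V).

Lemma hadj_sym H : symmetric (hadj H).
Proof. by move=> a b; rewrite /hadj setUC. Qed.

Lemma hadj_mem adj H a b : is_subgraph adj H -> hadj H a b -> a \in H.1 /\ b \in H.1.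
Proof.
move=> subH /subH[x [y [E _ hx hy]]].
have : a \in [set a; b] /\ b \in [set a; b] by rewrite set21 set22.
by rewrite E => -[/set2P[]-> /set2P[]->].
Qed.

Lemma path_hadj_mem adj H x p y : is_subgraph adj H ->
  path (hadj H) x p -> y \in p -> y \in H.1.
Proof.
move=> subH; elim: p x => //= z p IH x /andP[h ep].
by rewrite in_cons => /orP[/eqP->|]; [case: (hadj_mem subH h) | exact: IH ep].
Qed.

Lemma nbrs_degree_gt1 H a v b : hadj H a v -> hadj H v b -> a != b -> 1 < degree H v.
Proof.
move=> hav hvb nab; rewrite /degree.
apply: leq_trans (subset_leq_card (A := [set [set a; v]; [set v; b]]) _).
  rewrite cards2 ltnS lt0b; apply/eqP => E.
  have : a \in [set v; b] by rewrite -E set21.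
  rewrite !inE (negbTE nab) orbF => /eqP av.
  have : b \in [set a; v] by rewrite E set22.
  by rewrite !inE av orbb => /eqP bv; rewrite av bv eqxx in nab.
apply/subsetP => eps; rewrite !inE => /orP[]/eqP->.
  by rewrite (hav : [set a; v] \in H.2) set22.
by rewrite (hvb : [set v; b] \in H.2) set21.
Qed.

Definition separates H v x y : bool := ~~ connect (avoid (hadj H) v) x y.

Lemma acyclic_nbrs_separated H a v b : ~ has_cycle H ->
  hadj H a v -> hadj H v b -> a != b -> separates H v a b.
Proof.
move=> acH hav hvb nab; apply/negP => /connect_uniq_path[p [pp up lp]].
apply: acH; exists (v :: a :: p).
have vp := path_avoid_notin pp.
case: p pp up lp vp => [/= _ _ ab|c p pp up lp vp]; first by rewrite ab eqxx in nab.
have av : a != v by case/andP: pp => /and3P[].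
split => //; first by rewrite cons_uniq up andbT in_cons negb_or eq_sym av.
rewrite /= rcons_path hadj_sym hav /=.
have /= /andP[-> ->] := sub_path (@avoid_sub _ _ v) pp.
by rewrite /= in lp; rewrite lp hadj_sym.
Qed.

Lemma acyclic_path_separates H x p v : ~ has_cycle H ->
  path (hadj H) x p -> uniq (x :: p) -> v \in p -> v != last x p ->
  separates H v x (last x p).
Proof.
move=> acH pp up vp vl.
have [a [b [[hav hvb _ _] [nab ca cb]]]] := split_path_at pp up vp vl.
apply/negP => cxy; apply/negP: (acyclic_nbrs_separated acH hav hvb nab).
have cs := connect_avoid_sym v (@hadj_sym H).
rewrite cs in ca; rewrite cs in cb; rewrite /separates negbK.
exact: connect_trans ca (connect_trans cxy cb).
Qed.

Lemma separates_internal H v x y P : is_path H x y P ->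
  v != x -> v != y -> separates H v x y -> v \in internal P.
Proof.
move=> [_ pP uP lP] vx vy; apply: contraR => ni; apply/connectP.
exists P; last by rewrite lP.
apply: path_avoid => //; rewrite in_cons negb_or vx /=.
move: pP uP lP ni; case/lastP: P => [|P' z] //= _ _.
rewrite last_rcons /internal size_rcons /= -cats1 take_size_cat // => zy ni.
by rewrite cats1 mem_rcons in_cons negb_or ni zy vy.
Qed.

(* In a tree this is the union of the paths between vertices of [S]
   ([mem_hull_path], [hull_path]); defining it through separation rather
   than through paths keeps membership decidable. *)
Definition hull (T : subgraph V) (S : {set V}) : {set V} :=
  [set v in T.1 | (v \in S) || [exists x1 in S, exists x2 in S, separates T v x1 x2]].

Definition prune (T : subgraph V) (S : {set V}) : subgraph V :=
  (hull T S, [set eps in T.2 | eps \subset hull T S]).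

Lemma hadj_prune T S a b :
  hadj (prune T S) a b = [&& hadj T a b, a \in hull T S & b \in hull T S].
Proof. by rewrite /hadj /= inE subUset !sub1set. Qed.

Lemma prune_edges_sub T S : (prune T S).2 \subset T.2.
Proof. by apply/subsetP => eps; rewrite inE => /andP[]. Qed.

Lemma is_path_prune T S x y P : is_path (prune T S) x y P -> is_path T x y P.
Proof.
case; rewrite inE => /andP[xT _] pP uP lP; split => //.
by apply: sub_path pP => a b; rewrite hadj_prune => /and3P[].
Qed.

Lemma sub_hull T S : S \subset T.1 -> S \subset hull T S.
Proof. by move=> ST; apply/subsetP => x xS; rewrite inE (subsetP ST) ?xS. Qed.

Section Pruning.
Variables (adj : rel V) (T : subgraph V) (S : {set V}).
Hypotheses (subT : is_subgraph adj T) (connT : sub_connected T).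
Hypotheses (acT : ~ has_cycle T) (ST : S \subset T.1).

Lemma mem_hull_path x1 x2 p u : x1 \in S -> x2 \in S -> is_path T x1 x2 p ->
  u \in x1 :: p -> u \in hull T S.
Proof.
move=> x1S x2S [x1T pp up lp] uin; rewrite inE.
have [ux1 | ux1] := eqVneq u x1; first by rewrite ux1 x1T x1S.
have up' : u \in p by move: uin; rewrite in_cons (negbTE ux1).
rewrite (path_hadj_mem subT pp up') /=; case: (boolP (u \in S)) => //= uS.
apply/exists_inP; exists x1 => //; apply/exists_inP; exists x2 => //.
rewrite -lp; apply: acyclic_path_separates => //.
by rewrite lp; apply: contraNneq uS => ->.
Qed.

Lemma hull_path v : v \in hull T S -> v \notin S ->
  exists x1 x2 p, [/\ x1 \in S, x2 \in S, is_path T x1 x2 p & v \in p].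
Proof.
rewrite inE => /andP[_ /orP[->//|/exists_inP[x1 x1S /exists_inP[x2 x2S sep]]]] vS.
have [p hp] := connT (subsetP ST _ x1S) (subsetP ST _ x2S).
exists x1, x2, p; split => //; apply: mem_take (separates_internal hp _ _ sep).
  by apply: contraNneq vS => ->.
by apply: contraNneq vS => ->.
Qed.

Lemma connect_prune_path x1 x2 p u : x1 \in S -> x2 \in S -> is_path T x1 x2 p ->
  u \in x1 :: p -> connect (hadj (prune T S)) x1 u.
Proof.
move=> x1S x2S hp; case: (hp) => _ pp _ _; apply: path_connect.
apply: (sub_in_path (P := mem (hull T S))) pp.
  by move=> a b ah bh hab; rewrite hadj_prune hab ah bh.
by apply/allP => w; exact: mem_hull_path hp.
Qed.

Lemma hull_connect_S u : u \in hull T S ->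
  exists2 x, x \in S & connect (hadj (prune T S)) x u.
Proof.
move=> uh; case: (boolP (u \in S)) => uS; first by exists u.
have [x1 [x2 [p [x1S x2S hp up]]]] := hull_path uh uS.
by exists x1 => //; apply: connect_prune_path x1S x2S hp _; rewrite in_cons up orbT.
Qed.

Lemma prune_subgraph : is_subgraph adj (prune T S).
Proof.
move=> eps; rewrite inE => /andP[/subT[x [y [E axy _ _]]] sub].
exists x, y; split => //; apply: (subsetP sub); by rewrite E ?set21 ?set22.
Qed.

Lemma prune_connected : sub_connected (prune T S).
Proof.
move=> u w uh wh.
have [x xS cxu] := hull_connect_S uh; have [y yS cyw] := hull_connect_S wh.
have [p hp] := connT (subsetP ST _ xS) (subsetP ST _ yS).
have cxy : connect (hadj (prune T S)) x y.
  by apply: connect_prune_path xS yS (hp) _; case: hp => _ _ _ <-; exact: mem_last.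
rewrite (sym_connect_sym (@hadj_sym _)) in cxu.
have [s [ps us ls]] := connect_uniq_path (connect_trans cxu (connect_trans cxy cyw)).
by exists s.
Qed.

Lemma prune_acyclic : ~ has_cycle (prune T S).
Proof.
move=> [c [sz uc cc]]; apply: acT; exists c; split => //.
by apply: sub_cycle cc => a b; rewrite hadj_prune => /and3P[].
Qed.

Lemma prune_leaf v : v \in hull T S -> degree (prune T S) v = 1 -> v \in S.
Proof.
move=> vh dv; apply: contraT => vS.
have [x1 [x2 [p [x1S x2S hp vp]]]] := hull_path vh vS.
case: (hp) => _ pp up lp.
have vl : v != last x1 p by rewrite lp; apply: contraNneq vS => ->.
have [a [b [[hav hvb ain bin] [nab _ _]]]] := split_path_at pp up vp vl.
have inh w : w \in x1 :: p -> w \in hull T S := mem_hull_path x1S x2S hp.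
have := @nbrs_degree_gt1 (prune T S) a v b.
by rewrite !hadj_prune hav hvb vh !inh // dv => /(_ isT isT nab).
Qed.

Lemma prune_steiner : steiner_tree adj S (prune T S).
Proof.
split; last exact: prune_leaf; last exact: sub_hull.
split; [exact: prune_subgraph | exact: prune_connected | exact: prune_acyclic].
Qed.

End Pruning.

Lemma hull_meet (T1 T2 : subgraph V) (S : {set V}) :
    sub_connected T1 -> sub_connected T2 -> S \subset T1.1 -> S \subset T2.1 ->
    (forall x1 x2, x1 \in S -> x2 \in S -> forall P Q,
       is_path T1 x1 x2 P -> is_path T2 x1 x2 Q -> [disjoint internal P & internal Q]) ->
  hull T1 S :&: hull T2 S = S.
Proof.
move=> conn1 conn2 S1 S2 indep; apply/setP => v; rewrite inE.
apply/andP/idP => [[]|vS]; last by rewrite !(subsetP (sub_hull _)).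
rewrite !inE => /andP[_ /orP[->//|/exists_inP[x1 x1S /exists_inP[x2 x2S sep1]]]].
move=> /andP[_ /orP[->//|/exists_inP[y1 y1S /exists_inP[y2 y2S sep2]]]].
apply: contraT => vS.
have cs i := connect_avoid_sym v (@hadj_sym i).
have [z1 [z2 [z1S z2S sepz1 sepz2]]] :=
  common_unrelated_pair (cs T1) (@connect_trans _ _) (cs T2) (@connect_trans _ _)
    x1S x2S y1S y2S sep1 sep2.
have [P hP] := conn1 z1 z2 (subsetP S1 _ z1S) (subsetP S1 _ z2S).
have [Q hQ] := conn2 z1 z2 (subsetP S2 _ z1S) (subsetP S2 _ z2S).
have vz1 : v != z1 by apply: contraNneq vS => ->.
have vz2 : v != z2 by apply: contraNneq vS => ->.
have iP := separates_internal hP vz1 vz2 sepz1.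
have iQ := separates_internal hQ vz1 vz2 sepz2.
by rewrite (disjointFl (indep z1 z2 z1S z2S P Q hP hQ) iQ) in iP.
Qed.

Lemma has_cist_subset adj (S S' : {set V}) k : S \subset S' ->
  has_cist adj S' k -> has_cist adj S k.
Proof.
move=> SS' [T [steinerT indepT]].
have ST i : S \subset (T i).1 by case: (steinerT i) => _ /(subset_trans SS').
exists (fun i => prune (T i) S); split => [i | p q pq].
  by case: (steinerT i) => -[subT connT acT] _ _; exact: prune_steiner subT connT acT (ST i).
have [dE _ indep] := indepT p q pq.
have indepS x1 x2 : x1 \in S -> x2 \in S -> forall P Q,
    is_path (T p) x1 x2 P -> is_path (T q) x1 x2 Q -> [disjoint internal P & internal Q].
  by move=> /(subsetP SS') x1S' /(subsetP SS') x2S'; exact: indep.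
case: (steinerT p) => -[_ connp _] _ _; case: (steinerT q) => -[_ connq _] _ _.
split.
- exact: disjointWl (prune_edges_sub _ _) (disjointWr (prune_edges_sub _ _) dE).
- exact: hull_meet.
- by move=> x1 x2 x1S x2S P Q /is_path_prune hP /is_path_prune hQ; exact: indepS x1S x2S _ _ hP hQ.
Qed.

End Subgraphs.

Theorem theorem2p2 (V : finType) (adj : rel V) (S S' : {set V}) :
  simple_graph adj -> graph_connected adj ->
  2 <= #|S| -> S \proper S' ->
  (forall k : nat, has_cist adj S' k -> has_cist adj S k) /\
  (forall m m' : nat, is_kappa_star adj S m -> is_kappa_star adj S' m' -> m' <= m).
Proof.
move=> _ _ _ /proper_sub SS'; split => [k | m m' [_ maxm] [hm' _]].
  exact: has_cist_subset.
exact/maxm/(has_cist_subset SS').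
Qed.
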